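(* Let $\mathsf{L}$ be a normal modal logic admitting finite chains and let $t(x,y,z) = \Box(y\vee\Box(z\vee x))\vee x$. Suppose $\mathcal{V}_\mathsf{L}$ satisfies the fixpoint embedding condition with respect to $t$: for any finitely generated $\mathbf{A}\in\mathcal{V}_\mathsf{L}$ and $a,b,c\in A$ there is $\mathbf{B}\in\mathcal{V}_\mathsf{L}$ having $\mathbf{A}$ as a subalgebra such that $\bigvee_{k\in\mathbb{N}} t^k(a,b,c)$ exists in $\mathbf{B}$ and $\bigvee_{k\in\mathbb{N}} t^k(a,b,c) = t\big(\bigvee_{k\in\mathbb{N}} t^k(a,b,c),b,c\big)$. Then $\mathcal{V}_\mathsf{L}$ is not coherent.
   Context: $\mathcal{V}_\mathsf{L}$ denotes the variety of modal algebras corresponding to $\mathsf{L}$. Iterates: $t^0(x,y,z):=x$, $t^{k+1}(x,y,z):=t(t^k(x,y,z),y,z)$. A finite chain is a Kripke frame $(C,R)$ with $C$ finite such that the reflexive closure of $R$ is a total order on $C$; $\mathsf{L}$ admits finite chains if for each $n\in\mathbb{N}$ some $n$-element finite chain is a frame for $\mathsf{L}$. A variety is coherent if every finitely generated subalgebra of a finitely presented member is finitely presented. *)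

From Stdlib Require List.
From mathcomp Require Import all_boot.
Set Implicit Arguments. Unset Strict Implicit. Unset Printing Implicit Defensive.

Inductive fm : Type :=
| Var : nat -> fm
| Bot : fm
| Top : fm
| Neg : fm -> fm
| And : fm -> fm -> fm
| Or  : fm -> fm -> fm
| Imp : fm -> fm -> fm
| Box : fm -> fm.

Fixpoint subst (s : nat -> fm) (p : fm) : fm :=
  match p with
  | Var i => s i
  | Bot => Bot
  | Top => Top
  | Neg a => Neg (subst s a)
  | And a b => And (subst s a) (subst s b)
  | Or a b => Or (subst s a) (subst s b)
  | Imp a b => Imp (subst s a) (subst s b)
  | Box a => Box (subst s a)
  end.

(* Classical (Boolean) evaluation in which variables and boxed subformulas
   are treated as atoms: [taut p] says p is a substitution instance of a
   classical propositional tautology. *)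
Fixpoint beval (v : fm -> bool) (p : fm) : bool :=
  match p with
  | Var i => v (Var i)
  | Bot => false
  | Top => true
  | Neg a => ~~ beval v a
  | And a b => beval v a && beval v b
  | Or a b => beval v a || beval v b
  | Imp a b => beval v a ==> beval v b
  | Box a => v (Box a)
  end.

Definition taut (p : fm) : Prop := forall v : fm -> bool, beval v p = true.

Definition normal_logic (L : fm -> Prop) : Prop :=
  [/\ (forall p, taut p -> L p),
      (forall p q, L (Imp (Box (Imp p q)) (Imp (Box p) (Box q)))),
      (forall p q, L p -> L (Imp p q) -> L q),
      (forall p, L p -> L (Box p)) &
      (forall p (s : nat -> fm), L p -> L (subst s p))].

Record modalAlgebra := ModalAlgebra {
  carrier :> Type;
  join : carrier -> carrier -> carrier;
  meet : carrier -> carrier -> carrier;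
  compl : carrier -> carrier;
  bot : carrier;
  top : carrier;
  box : carrier -> carrier;
  joinC : forall x y, join x y = join y x;
  meetC : forall x y, meet x y = meet y x;
  joinA : forall x y z, join x (join y z) = join (join x y) z;
  meetA : forall x y z, meet x (meet y z) = meet (meet x y) z;
  joinKmeet : forall x y, join x (meet x y) = x;
  meetKjoin : forall x y, meet x (join x y) = x;
  meet_joinDr : forall x y z, meet x (join y z) = join (meet x y) (meet x z);
  join_meetDr : forall x y z, join x (meet y z) = meet (join x y) (join x z);
  join0x : forall x, join bot x = x;
  meet1x : forall x, meet top x = x;
  join_compl : forall x, join x (compl x) = top;
  meet_compl : forall x, meet x (compl x) = bot;
  box_top : box top = top;
  box_meet : forall x y, box (meet x y) = meet (box x) (box y)
}.

Arguments join {m}. Arguments meet {m}. Arguments compl {m}.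
Arguments bot {m}. Arguments top {m}. Arguments box {m}.

Fixpoint aeval (A : modalAlgebra) (v : nat -> A) (p : fm) : A :=
  match p with
  | Var i => v i
  | Bot => bot
  | Top => top
  | Neg a => compl (aeval v a)
  | And a b => meet (aeval v a) (aeval v b)
  | Or a b => join (aeval v a) (aeval v b)
  | Imp a b => join (compl (aeval v a)) (aeval v b)
  | Box a => box (aeval v a)
  end.

Definition ale (A : modalAlgebra) (x y : A) : Prop := join x y = y.

Definition alg_valid (A : modalAlgebra) (p : fm) : Prop :=
  forall v : nat -> A, aeval v p = top.

Definition V_L (L : fm -> Prop) (A : modalAlgebra) : Prop :=
  forall p, L p -> alg_valid A p.

Definition is_hom (A B : modalAlgebra) (f : A -> B) : Prop :=
  [/\ (forall x y, f (join x y) = join (f x) (f y)),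
      (forall x y, f (meet x y) = meet (f x) (f y)),
      (forall x, f (compl x) = compl (f x)) &
      [/\ f bot = bot, f top = top &
      (forall x, f (box x) = box (f x))]].

Definition embedding (A B : modalAlgebra) (f : A -> B) : Prop :=
  is_hom f /\ injective f.

Definition val_of (A : modalAlgebra) (gs : seq A) : nat -> A :=
  fun i => nth bot gs i.

Definition generated_by (A : modalAlgebra) (gs : seq A) : Prop :=
  forall a : A, exists p, aeval (val_of gs) p = a.

Definition fin_generated (A : modalAlgebra) : Prop :=
  exists gs : seq A, generated_by gs.

Definition fin_presented (V : modalAlgebra -> Prop) (A : modalAlgebra) : Prop :=
  exists (gs : seq A) (E : seq (fm * fm)),
    [/\ generated_by gs,
        (forall e, List.In e E -> aeval (val_of gs) e.1 = aeval (val_of gs) e.2) &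
        (forall C : modalAlgebra, V C -> forall cs : seq C, size cs = size gs ->
           (forall e, List.In e E -> aeval (val_of cs) e.1 = aeval (val_of cs) e.2) ->
           exists h : A -> C, is_hom h /\
             forall i, i < size gs -> h (nth bot gs i) = nth bot cs i)].

(* Coherence: every finitely generated subalgebra of a finitely presented
   member is finitely presented (subalgebras = images of embeddings). *)
Definition coherent (V : modalAlgebra -> Prop) : Prop :=
  forall A : modalAlgebra, V A -> fin_presented V A ->
  forall (B : modalAlgebra) (f : B -> A), embedding f -> fin_generated B ->
  fin_presented V B.

Fixpoint ksat (W : finType) (R : rel W) (V : nat -> W -> bool) (w : W) (p : fm) : Prop :=
  match p with
  | Var i => V i w = true
  | Bot => False
  | Top => True
  | Neg a => ~ ksat R V w a
  | And a b => ksat R V w a /\ ksat R V w b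
  | Or a b => ksat R V w a \/ ksat R V w b
  | Imp a b => ksat R V w a -> ksat R V w b
  | Box a => forall u, R w u -> ksat R V u a
  end.

Definition frame_valid (W : finType) (R : rel W) (p : fm) : Prop :=
  forall (V : nat -> W -> bool) (w : W), ksat R V w p.

Definition is_chain (W : finType) (R : rel W) : Prop :=
  let R' := fun x y => (x == y) || R x y in
  [/\ (forall x y z, R' x y -> R' y z -> R' x z),
      (forall x y, R' x y -> R' y x -> x = y) &
      (forall x y, R' x y \/ R' y x)].

Definition admits_finite_chains (L : fm -> Prop) : Prop :=
  forall n : nat, exists (W : finType) (R : rel W),
    [/\ #|W| = n, is_chain R & forall p, L p -> frame_valid R p].

Definition tt3 (A : modalAlgebra) (x y z : A) : A :=
  join (box (join y (box (join z x)))) x.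

Fixpoint titer (A : modalAlgebra) (k : nat) (x y z : A) : A :=
  match k with
  | 0 => x
  | k'.+1 => tt3 (titer k' x y z) y z
  end.

Definition is_lub (A : modalAlgebra) (F : nat -> A) (s : A) : Prop :=
  (forall k, ale (F k) s) /\ (forall u, (forall k, ale (F k) u) -> ale s u).

Definition fixpoint_embedding_condition (L : fm -> Prop) : Prop :=
  forall A : modalAlgebra, V_L L A -> fin_generated A ->
  forall a b c : A,
  exists (B : modalAlgebra) (f : A -> B),
    [/\ V_L L B, embedding f &
        exists s : B, is_lub (fun k => titer k (f a) (f b) (f c)) s /\
                      s = tt3 s (f b) (f c)].

From mathcomp Require Import all_boot zify.
From Stdlib Require Import FunctionalExtensionality PropExtensionality ProofIrrelevance IndefiniteDescription.

(* Let P be presented by generators a, b, c, d, s and relations a <= s = t(s, b, c) <= d, and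
   let S be its subalgebra generated by a, b, c, d; S is the algebra of the theory "some fixpoint
   of t(-, b, c) lies between a and d".  The fixpoint embedding condition shows that this theory
   is the directed union of the theories "t^n(a, b, c) <= d".  If S were finitely presented, its
   finitely many relations, and hence all its equations, would already follow from one of them,
   so t^(n+1)(a, b, c) <= d would follow from t^n(a, b, c) <= d.  On a chain with 4n + 1 points,
   taking b and c to be the points of even and odd rank, each step of t from the empty set gains
   at most four points yet never stalls before reaching the whole chain, refuting this. *)

Section ModalAlgebraOrder.
Context {A : modalAlgebra}.
Implicit Types x y z b c : A.

Lemma joinxx x : join x x = x.
Proof. by have := joinKmeet x (join x x); rewrite meetKjoin. Qed.

Lemma ale_refl x : ale x x.
Proof. exact: joinxx. Qed.

Lemma ale_trans {x y z} : ale x y -> ale y z -> ale x z.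
Proof. by rewrite /ale => Hxy Hyz; rewrite -Hyz joinA Hxy. Qed.

Lemma ale_joinr x y : ale x (join y x).
Proof. by rewrite /ale joinC -joinA joinxx. Qed.

Lemma ale_meet {x y} : ale x y -> meet x y = x.
Proof. by rewrite /ale => <-; rewrite meetKjoin. Qed.

Lemma box_mono {x y} : ale x y -> ale (box x) (box y).
Proof. by move=> /ale_meet Hxy; rewrite /ale -{1}Hxy box_meet joinC meetC joinKmeet. Qed.

Lemma join_mono {x y} z : ale x y -> ale (join z x) (join z y).
Proof.
by rewrite /ale => Hxy; rewrite -joinA [join x _]joinA [join x z]joinC -joinA Hxy joinA joinxx.
Qed.

Lemma tt3_mono {x y} b c : ale x y -> ale (tt3 x b c) (tt3 y b c).
Proof.
move=> Hxy; apply: (@ale_trans _ (join (box (join b (box (join c y)))) x)).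
  rewrite /tt3 (joinC (box _) x) (joinC (box _) x).
  by do 2 (apply: join_mono; apply: box_mono); apply: join_mono.
exact: join_mono.
Qed.

Lemma titer_mono {m n} x b c : m <= n -> ale (titer m x b c) (titer n x b c).
Proof.
elim: n => [|n IHn]; first by rewrite leqn0 => /eqP ->; apply: ale_refl.
rewrite leq_eqVlt => /orP [/eqP ->|/IHn Hmn]; first exact: ale_refl.
exact: ale_trans Hmn (ale_joinr _ _).
Qed.

Lemma titer_le_fixpoint k {a b c s} : ale a s -> s = tt3 s b c -> ale (titer k a b c) s.
Proof. by move=> Has Hs; elim: k => [|k IHk] //=; rewrite Hs; apply: tt3_mono. Qed.

End ModalAlgebraOrder.

Lemma aeval_ext {A : modalAlgebra} {e e' : nat -> A} p :
  e =1 e' -> aeval e p = aeval e' p.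
Proof. by move=> Ee; elim: p => //= [a ->|a -> b ->|a -> b ->|a -> b ->|a ->]. Qed.

Lemma aeval_subst (A : modalAlgebra) (e : nat -> A) s p :
  aeval e (subst s p) = aeval (fun i => aeval e (s i)) p.
Proof. by elim: p => //= [a ->|a -> b ->|a -> b ->|a -> b ->|a ->]. Qed.

Lemma subst_Var p : subst Var p = p.
Proof. by elim: p => //= [a ->|a -> b ->|a -> b ->|a -> b ->|a ->]. Qed.

Lemma hom_aeval {A B : modalAlgebra} {f : A -> B} (f_hom : is_hom f) (e : nat -> A) p :
  f (aeval e p) = aeval (fun i => f (e i)) p.
Proof.
case: f_hom => fJ fM fC [f0 f1 fB].
by elim: p => //= [a <-|a <- b <-|a <- b <-|a <- b <-|a <-]; rewrite ?fJ ?fM ?fC ?fB.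
Qed.

Definition tfm (p q r : fm) : fm := Or (Box (Or q (Box (Or r p)))) p.

Fixpoint tfm_iter (k : nat) (p q r : fm) : fm :=
  if k is k'.+1 then tfm (tfm_iter k' p q r) q r else p.

Lemma aeval_tfm_iter (A : modalAlgebra) (e : nat -> A) k p q r :
  aeval e (tfm_iter k p q r) = titer k (aeval e p) (aeval e q) (aeval e r).
Proof. by elim: k => //= k ->. Qed.

Record fm_congruence (L : fm -> Prop) := FmCongruence {
  cong :> fm -> fm -> Prop;
  cong_sym : forall p q, cong p q -> cong q p;
  cong_trans : forall p q r, cong p q -> cong q r -> cong p r;
  cong_Neg : forall p q, cong p q -> cong (Neg p) (Neg q);
  cong_And : forall p p' q q', cong p p' -> cong q q' -> cong (And p q) (And p' q');
  cong_Or : forall p p' q q', cong p p' -> cong q q' -> cong (Or p q) (Or p' q');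
  cong_Box : forall p q, cong p q -> cong (Box p) (Box q);
  cong_sem : forall p q,
    (forall C, V_L L C -> forall e : nat -> C, aeval e p = aeval e q) -> cong p q }.

Arguments cong_sym {L R p q} : rename.
Arguments cong_trans {L R p q r} : rename.
Arguments cong_Neg {L R p q} : rename.
Arguments cong_And {L R p p' q q'} : rename.
Arguments cong_Or {L R p p' q q'} : rename.
Arguments cong_Box {L R p q} : rename.
Arguments cong_sem {L} R {p q} : rename.

Section Lindenbaum.
Context {L : fm -> Prop} (R : fm_congruence L).

Lemma cong_refl p : R p p.
Proof. exact: cong_sem. Qed.

Definition lind_class := {X : fm -> Prop | exists p, X = R p}.

Definition cls (p : fm) : lind_class := exist _ (R p) (ex_intro _ p erefl).

Definition rep (X : lind_class) : fm :=
  proj1_sig (constructive_indefinite_description _ (proj2_sig X)).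

Lemma cls_rep X : cls (rep X) = X.
Proof.
case: X => X HX; apply: subset_eq_compat; rewrite /rep /=.
by case: (constructive_indefinite_description _ _) => p /= ->.
Qed.

Lemma cls_eq p q : cls p = cls q <-> R p q.
Proof.
split=> [/(congr1 (@proj1_sig _ _)) /= ->|Rpq]; first exact: cong_refl.
apply: subset_eq_compat; apply: functional_extensionality => r.
apply: propositional_extensionality.
by split=> ?; [apply: cong_trans (cong_sym Rpq) _ | apply: cong_trans Rpq _].
Qed.

Lemma clsP X : exists p, X = cls p.
Proof. by exists (rep X); rewrite cls_rep. Qed.

Lemma rep_cls p : R (rep (cls p)) p.
Proof. by apply/cls_eq; rewrite cls_rep. Qed.

Lemma cls_sem p q :
  (forall (C : modalAlgebra) (e : nat -> C), aeval e p = aeval e q) -> cls p = cls q.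
Proof. by move=> Epq; apply/cls_eq/cong_sem => C _ e; apply: Epq. Qed.

Definition ljoin X Y := locked (cls (Or (rep X) (rep Y))).
Definition lmeet X Y := locked (cls (And (rep X) (rep Y))).
Definition lcompl X := locked (cls (Neg (rep X))).
Definition lbox X := locked (cls (Box (rep X))).

Lemma ljoinE p q : ljoin (cls p) (cls q) = cls (Or p q).
Proof. by rewrite /ljoin -lock; apply/cls_eq/cong_Or; apply: rep_cls. Qed.
Lemma lmeetE p q : lmeet (cls p) (cls q) = cls (And p q).
Proof. by rewrite /lmeet -lock; apply/cls_eq/cong_And; apply: rep_cls. Qed.
Lemma lcomplE p : lcompl (cls p) = cls (Neg p).
Proof. by rewrite /lcompl -lock; apply/cls_eq/cong_Neg; apply: rep_cls. Qed.
Lemma lboxE p : lbox (cls p) = cls (Box p).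
Proof. by rewrite /lbox -lock; apply/cls_eq/cong_Box; apply: rep_cls. Qed.

Local Ltac lind_axiom :=
  repeat (let X := fresh "X" in move=> X; have [? ->] := clsP X);
  rewrite ?(ljoinE, lmeetE, lcomplE, lboxE);
  apply: cls_sem => C e /=.

Lemma ljoinC : forall X Y, ljoin X Y = ljoin Y X.
Proof. lind_axiom; exact: joinC. Qed.
Lemma lmeetC : forall X Y, lmeet X Y = lmeet Y X.
Proof. lind_axiom; exact: meetC. Qed.
Lemma ljoinA : forall X Y Z, ljoin X (ljoin Y Z) = ljoin (ljoin X Y) Z.
Proof. lind_axiom; exact: joinA. Qed.
Lemma lmeetA : forall X Y Z, lmeet X (lmeet Y Z) = lmeet (lmeet X Y) Z.
Proof. lind_axiom; exact: meetA. Qed.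
Lemma ljoinKmeet : forall X Y, ljoin X (lmeet X Y) = X.
Proof. lind_axiom; exact: joinKmeet. Qed.
Lemma lmeetKjoin : forall X Y, lmeet X (ljoin X Y) = X.
Proof. lind_axiom; exact: meetKjoin. Qed.
Lemma lmeet_joinDr : forall X Y Z, lmeet X (ljoin Y Z) = ljoin (lmeet X Y) (lmeet X Z).
Proof. lind_axiom; exact: meet_joinDr. Qed.
Lemma ljoin_meetDr : forall X Y Z, ljoin X (lmeet Y Z) = lmeet (ljoin X Y) (ljoin X Z).
Proof. lind_axiom; exact: join_meetDr. Qed.
Lemma ljoin0x : forall X, ljoin (cls Bot) X = X.
Proof. lind_axiom; exact: join0x. Qed.
Lemma lmeet1x : forall X, lmeet (cls Top) X = X.
Proof. lind_axiom; exact: meet1x. Qed.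
Lemma ljoin_compl : forall X, ljoin X (lcompl X) = cls Top.
Proof. lind_axiom; exact: join_compl. Qed.
Lemma lmeet_compl : forall X, lmeet X (lcompl X) = cls Bot.
Proof. lind_axiom; exact: meet_compl. Qed.
Lemma lbox_top : lbox (cls Top) = cls Top.
Proof. lind_axiom; exact: box_top. Qed.
Lemma lbox_meet : forall X Y, lbox (lmeet X Y) = lmeet (lbox X) (lbox Y).
Proof. lind_axiom; exact: box_meet. Qed.

Definition lindenbaum : modalAlgebra :=
  ModalAlgebra ljoinC lmeetC ljoinA lmeetA ljoinKmeet lmeetKjoin lmeet_joinDr
    ljoin_meetDr ljoin0x lmeet1x ljoin_compl lmeet_compl lbox_top lbox_meet.
Canonical lindenbaum.

Lemma cls_join p q : join (cls p) (cls q) = cls (Or p q). Proof. exact: ljoinE. Qed.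
Lemma cls_meet p q : meet (cls p) (cls q) = cls (And p q). Proof. exact: lmeetE. Qed.
Lemma cls_compl p : compl (cls p) = cls (Neg p). Proof. exact: lcomplE. Qed.
Lemma cls_box p : box (cls p) = cls (Box p). Proof. exact: lboxE. Qed.
Lemma cls_bot : bot = cls Bot. Proof. by []. Qed.
Lemma cls_top : top = cls Top. Proof. by []. Qed.

Lemma aeval_cls (s : nat -> fm) p :
  aeval (A := lindenbaum) (fun i => cls (s i)) p = cls (subst s p).
Proof.
elim: p => //= [a ->|a -> b ->|a -> b ->|a -> b ->|a ->].
- exact: cls_compl.
- exact: cls_meet.
- exact: cls_join.
- by rewrite cls_compl cls_join; apply: cls_sem.
- exact: cls_box.
Qed.

Lemma aeval_cls_Var p : aeval (A := lindenbaum) (fun i => cls (Var i)) p = cls p.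
Proof. by rewrite aeval_cls subst_Var. Qed.

Lemma lindenbaum_V_L : V_L L lindenbaum.
Proof.
move=> p Lp v; have -> : v = fun i => cls (rep (v i)).
  by apply: functional_extensionality => i; rewrite cls_rep.
rewrite aeval_cls; apply/cls_eq/cong_sem => C VC e.
by rewrite aeval_subst; apply: VC.
Qed.

End Lindenbaum.

Arguments rep {L R} X.
Arguments clsP {L R} X.

Definition valuation_class := forall C : modalAlgebra, (nat -> C) -> Prop.

Definition vanish_from {C : modalAlgebra} (k : nat) (e : nat -> C) : Prop :=
  forall i, k <= i -> e i = bot.

Definition vanishing (k : nat) (K : valuation_class) : Prop :=
  forall (C : modalAlgebra) (e : nat -> C), K C e -> vanish_from k e.

Lemma val_of_vanish (C : modalAlgebra) (cs : seq C) : vanish_from (size cs) (val_of cs).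
Proof. by move=> i hi; rewrite /val_of nth_default. Qed.

Definition var_classes {L : fm -> Prop} (R : fm_congruence L) (k : nat) : seq (lindenbaum R) :=
  [seq cls R (Var i) | i <- iota 0 k].

Lemma aeval_val_of {L : fm -> Prop} {R : fm_congruence L} (xs : seq (lindenbaum R))
    (s : nat -> fm) :
  (forall i, i < size xs -> nth bot xs i = cls R (s i)) -> (forall i, size xs <= i -> s i = Bot) ->
  forall r, aeval (val_of xs) r = cls R (subst s r).
Proof.
move=> xs_s s_Bot r; rewrite -aeval_cls; apply: aeval_ext => i; rewrite /val_of.
by case: (ltnP i (size xs)) => hi; [apply: xs_s | rewrite nth_default // s_Bot].
Qed.

Section Congruences.
Context {L : fm -> Prop} {R R' : fm_congruence L}.

Lemma val_of_Vars {k} : (forall i, k <= i -> R (Var i) Bot) ->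
  val_of (var_classes R k) =1 (fun i => cls R (Var i)).
Proof.
move=> RVar i; rewrite /val_of; case: (ltnP i k) => hi.
  by rewrite (nth_map 0) ?size_iota // nth_iota.
by rewrite nth_default ?size_map ?size_iota //; apply/esym/cls_eq/RVar.
Qed.

Lemma lindenbaum_generated {k} : (forall i, k <= i -> R (Var i) Bot) ->
  generated_by (var_classes R k).
Proof.
move=> RVar X; have [p ->] := clsP X; exists p.
by rewrite (aeval_ext _ (val_of_Vars RVar)) aeval_cls_Var.
Qed.

Lemma cong_sub_of_hom {h : lindenbaum R -> lindenbaum R'} : is_hom h ->
  (forall i, h (cls R (Var i)) = cls R' (Var i)) -> forall p q, R p q -> R' p q.
Proof.
move=> h_hom hVar p q; have h_cls r : h (cls R r) = cls R' r.
  by rewrite -aeval_cls_Var (hom_aeval h_hom) (aeval_ext _ hVar) aeval_cls_Var.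
by move=> /cls_eq /(congr1 h); rewrite !h_cls => /cls_eq.
Qed.

Lemma subst_embedding (s : nat -> fm) :
  (forall p q, R p q <-> R' (subst s p) (subst s q)) ->
  embedding (fun X : lindenbaum R => cls R' (subst s (rep X))).
Proof.
move=> Rs; set f := fun X => _.
have fE p : f (cls R p) = cls R' (subst s p) by apply/cls_eq/Rs/rep_cls.
split=> [|X Y]; last first.
  by have [p ->] := clsP X; have [q ->] := clsP Y; rewrite !fE => /cls_eq/Rs/cls_eq.
split=> [X Y|X Y|X|]; last split=> [||X].
- by have [p ->] := clsP X; have [q ->] := clsP Y; rewrite cls_join !fE cls_join.
- by have [p ->] := clsP X; have [q ->] := clsP Y; rewrite cls_meet !fE cls_meet.
- by have [p ->] := clsP X; rewrite cls_compl !fE cls_compl.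
- by rewrite cls_bot fE.
- by rewrite cls_top fE.
- by have [p ->] := clsP X; rewrite cls_box !fE cls_box.
Qed.

Definition gen_rep (gs : seq (lindenbaum R)) (i : nat) : fm :=
  if i < size gs then rep (nth bot gs i) else Bot.

Lemma aeval_gen_rep gs r : aeval (val_of gs) r = cls R (subst (gen_rep gs) r).
Proof.
apply: aeval_val_of => i hi; rewrite /gen_rep; last by rewrite ltnNge hi.
by rewrite hi cls_rep.
Qed.

(* The universal property of the presentation gives a homomorphism [lindenbaum R -> lindenbaum R']
   fixing every variable. *)
Lemma presentation_cong_sub k (gs : seq (lindenbaum R)) (E : seq (fm * fm)) :
  (forall C : modalAlgebra, V_L L C -> forall cs : seq C, size cs = size gs ->
     (forall pq, List.In pq E -> aeval (val_of cs) pq.1 = aeval (val_of cs) pq.2) ->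
     exists h : lindenbaum R -> C, is_hom h /\
       forall i, i < size gs -> h (nth bot gs i) = nth bot cs i) ->
  (forall i, k <= i -> R (Var i) Bot) -> (forall i, k <= i -> R' (Var i) Bot) ->
  (forall pq, List.In pq E -> R' (subst (gen_rep gs) pq.1) (subst (gen_rep gs) pq.2)) ->
  (forall i, i < k ->
     exists2 r, aeval (val_of gs) r = cls R (Var i) & R' (subst (gen_rep gs) r) (Var i)) ->
  forall p q, R p q -> R' p q.
Proof.
move=> gs_univ RVar R'Var R'E R'Var_gs.
pose cs := [seq cls R' (gen_rep gs i) | i <- iota 0 (size gs)].
have aeval_cs : forall r, aeval (val_of cs) r = cls R' (subst (gen_rep gs) r).
  apply: aeval_val_of => i; rewrite size_map size_iota => hi; last by rewrite /gen_rep ltnNge hi.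
  by rewrite (nth_map 0) ?size_iota // nth_iota.
have cs_E pq : List.In pq E -> aeval (val_of cs) pq.1 = aeval (val_of cs) pq.2.
  by move=> /R'E R'pq; rewrite !aeval_cs; apply/cls_eq.
have size_cs : size cs = size gs by rewrite size_map size_iota.
have [h [h_hom h_gs]] := gs_univ _ (lindenbaum_V_L R') cs size_cs cs_E.
have h_val i : h (val_of gs i) = val_of cs i.
  rewrite /val_of; case: (ltnP i (size gs)) => hi; first exact: h_gs.
  by rewrite !nth_default ?size_map ?size_iota //; case: h_hom => _ _ _ [].
apply: (cong_sub_of_hom h_hom) => i; case: (ltnP i k) => hi.
  have [r <- R'r] := R'Var_gs i hi.
  by rewrite (hom_aeval h_hom) (aeval_ext _ h_val) aeval_cs; apply/cls_eq.
have /cls_eq -> := RVar i hi; have /cls_eq -> := R'Var i hi.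
by case: h_hom => _ _ _ [].
Qed.

End Congruences.

Section Theories.
Variable L : fm -> Prop.

Definition th (K : valuation_class) (p q : fm) : Prop :=
  forall (C : modalAlgebra) (e : nat -> C), V_L L C -> K C e -> aeval e p = aeval e q.

Definition th_cong (K : valuation_class) : fm_congruence L.
Proof.
refine (@FmCongruence L (th K) _ _ _ _ _ _ _); rewrite /th.
- by move=> p q Hpq C e VC KCe; rewrite Hpq.
- by move=> p q r Hpq Hqr C e VC KCe; rewrite Hpq ?Hqr.
- by move=> p q Hpq C e VC KCe /=; rewrite Hpq.
- by move=> p p' q q' Hp Hq C e VC KCe /=; rewrite Hp ?Hq.
- by move=> p p' q q' Hp Hq C e VC KCe /=; rewrite Hp ?Hq.
- by move=> p q Hpq C e VC KCe /=; rewrite Hpq.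
- by move=> p q Hpq C e VC _; apply: Hpq.
Defined.

Lemma cls_th_eq (K : valuation_class) p q : cls (th_cong K) p = cls (th_cong K) q <-> th K p q.
Proof. exact: cls_eq. Qed.

Lemma th_Var_Bot {K : valuation_class} {k} : vanishing k K -> forall i, k <= i -> th K (Var i) Bot.
Proof. by move=> Kvan i hi C e _ KCe; apply: Kvan. Qed.

Lemma aeval_rep {K : valuation_class} {C : modalAlgebra} {e : nat -> C} p : V_L L C -> K C e ->
  aeval e (rep (cls (th_cong K) p)) = aeval e p.
Proof. by move=> VC KCe; apply: (rep_cls (th_cong K)). Qed.

Lemma aeval_rep_hom {K : valuation_class} {C : modalAlgebra} {e : nat -> C} : V_L L C -> K C e ->
  is_hom (fun X : lindenbaum (th_cong K) => aeval e (rep X)).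
Proof.
move=> VC KCe; have aeval_rep p := aeval_rep p VC KCe.
split=> [X Y|X Y|X|]; last split=> [||X].
- by have [p ->] := clsP X; have [q ->] := clsP Y; rewrite cls_join !aeval_rep.
- by have [p ->] := clsP X; have [q ->] := clsP Y; rewrite cls_meet !aeval_rep.
- by have [p ->] := clsP X; rewrite cls_compl !aeval_rep.
- by rewrite cls_bot aeval_rep.
- by rewrite cls_top aeval_rep.
- by have [p ->] := clsP X; rewrite cls_box !aeval_rep.
Qed.

Definition eqn_class (k : nat) (E : seq (fm * fm)) : valuation_class := fun C e =>
  vanish_from k e /\ forall pq, List.In pq E -> aeval e pq.1 = aeval e pq.2.
Arguments eqn_class : clear implicits.

Lemma eqn_class_vanishing k E : vanishing k (eqn_class k E).
Proof. by move=> C e []. Qed.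

Lemma eqn_class_fin_presented k E : fin_presented (V_L L) (lindenbaum (th_cong (eqn_class k E))).
Proof.
set R := th_cong _; have RVar := th_Var_Bot (@eqn_class_vanishing k E).
have evalE p : aeval (val_of (var_classes R k)) p = cls R p.
  by rewrite (aeval_ext _ (val_of_Vars (R := R) RVar)) aeval_cls_Var.
exists (var_classes R k), E; split.
- exact: (lindenbaum_generated (R := R) RVar).
- by move=> pq Epq; rewrite !evalE; apply/cls_eq => C e _ [_]; apply.
move=> C VC cs size_cs csE.
have KCe : eqn_class k E C (val_of cs).
  by split=> //; move: size_cs; rewrite size_map size_iota => <-; apply: val_of_vanish.
exists (fun X => aeval (val_of cs) (rep X)); split; first exact: aeval_rep_hom.
move=> i; rewrite size_map size_iota => hi.
by rewrite (nth_map 0) ?size_iota // nth_iota // (aeval_rep _ VC KCe).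
Qed.

End Theories.

Lemma In_iota m n i : m <= i < m + n -> List.In i (iota m n).
Proof.
elim: n m => [|n IHn] m /=; first lia.
by case: (eqVneq m i) => [->|ne] hi; [left | right; apply: IHn; lia].
Qed.

Lemma exists_uniform_bound (T : Type) (P : nat -> T -> Prop) (s : seq T) :
  (forall m n x, m <= n -> P m x -> P n x) ->
  (forall x, List.In x s -> exists n, P n x) -> exists n, forall x, List.In x s -> P n x.
Proof.
move=> P_mono; elim: s => [|x s IHs] Ps; first by exists 0.
have [m Pmx] := Ps x (or_introl erefl).
have [n Pns] := IHs (fun y sy => Ps y (or_intror sy)).
exists (maxn m n) => y /= [<-|sy]; first exact: P_mono (leq_maxl m n) Pmx.
exact: P_mono (leq_maxr m n) (Pns y sy).
Qed.

Section DirectedUnion.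
Variables (L : fm -> Prop) (K : nat -> valuation_class).
Hypothesis K_anti : forall m n (C : modalAlgebra) (e : nat -> C), m <= n -> K n C e -> K m C e.

Definition th_union (p q : fm) : Prop := exists n, th L (K n) p q.

Lemma th_mono {m n p q} : m <= n -> th L (K m) p q -> th L (K n) p q.
Proof. by move=> mn Hpq C e VC KCe; apply: Hpq => //; apply: K_anti KCe. Qed.

Lemma th_union2 p p' q q' : th_union p p' -> th_union q q' ->
  exists n, th L (K n) p p' /\ th L (K n) q q'.
Proof.
move=> [m Hp] [n Hq]; exists (maxn m n).
by split; [apply: th_mono (leq_maxl m n) Hp | apply: th_mono (leq_maxr m n) Hq].
Qed.

Definition th_union_cong : fm_congruence L.
Proof.
refine (@FmCongruence L th_union _ _ _ _ _ _ _).
- by move=> p q [n Hpq]; exists n; apply: (cong_sym (R := th_cong L (K n))).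
- move=> p q r /th_union2 H /H [n [Hpq Hqr]].
  by exists n; apply: (cong_trans (R := th_cong L (K n))) Hqr.
- by move=> p q [n Hpq]; exists n; apply: (cong_Neg (R := th_cong L (K n))).
- move=> p p' q q' /th_union2 H /H [n [Hp Hq]].
  by exists n; apply: (cong_And (R := th_cong L (K n))).
- move=> p p' q q' /th_union2 H /H [n [Hp Hq]].
  by exists n; apply: (cong_Or (R := th_cong L (K n))).
- by move=> p q [n Hpq]; exists n; apply: (cong_Box (R := th_cong L (K n))).
- by move=> p q Hpq; exists 0; apply: (cong_sem (th_cong L (K 0))).
Defined.

Lemma fin_presented_th_union {k} {K0 : valuation_class} :
  vanishing k K0 -> (forall n, vanishing k (K n)) ->
  fin_presented (V_L L) (lindenbaum (th_cong L K0)) ->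
  (forall p q, th L K0 p q -> th_union p q) ->
  exists n, forall p q, th L K0 p q -> th L (K n) p q.
Proof.
move=> K0van Kvan [gs [E [gs_gen gsE gs_univ]]] K0_union.
have [m HE] : exists m, forall pq, List.In pq E ->
    th L (K m) (subst (gen_rep gs) pq.1) (subst (gen_rep gs) pq.2).
  apply: exists_uniform_bound => [m1 m2 pq /th_mono|pq /gsE]; first exact.
  by rewrite !aeval_gen_rep => /cls_th_eq /K0_union.
have [n Hvar] : exists n, forall i, List.In i (iota 0 k) ->
    exists2 r, aeval (val_of gs) r = cls _ (Var i) & th L (K n) (subst (gen_rep gs) r) (Var i).
  apply: exists_uniform_bound => [n1 n2 i n12 [r Er Hr]|i _].
    by exists r; last exact: th_mono n12 Hr.
  have [r Er] := gs_gen (cls _ (Var i)).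
  have [n Hn] : th_union (subst (gen_rep gs) r) (Var i).
    by apply/K0_union/cls_th_eq; rewrite -aeval_gen_rep.
  by exists n, r.
exists (maxn m n); apply: (presentation_cong_sub (R' := th_cong L (K (maxn m n))) k _ _ gs_univ).
- exact: th_Var_Bot K0van.
- exact: th_Var_Bot (Kvan _).
- by move=> pq /HE; apply: th_mono (leq_maxl m n).
- by move=> i /(In_iota 0) /Hvar [r Er Hr]; exists r; last exact: th_mono (leq_maxr m n) Hr.
Qed.

End DirectedUnion.

Section FrameAlgebra.
Context {W : finType} (R : rel W).

Definition frame_box (X : {set W}) : {set W} := [set w | [forall u, R w u ==> (u \in X)]].

Lemma frame_box_setT : frame_box setT = setT.
Proof. by apply/setP => w; rewrite !inE; apply/forallP => u; rewrite inE implybT. Qed.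

Lemma frame_box_setI X Y : frame_box (X :&: Y) = frame_box X :&: frame_box Y.
Proof.
apply/setP => w; rewrite !inE; apply/forallP/andP => [XYw|[/forallP Xw /forallP Yw] u].
  by split; apply/forallP => u; move: (XYw u); rewrite inE; case: (R w u) => //= /andP[].
by rewrite inE; move: (Xw u) (Yw u); case: (R w u) => //= -> ->.
Qed.

Lemma setUKI (X Y : {set W}) : X :|: X :&: Y = X.
Proof. by rewrite setIC setKI. Qed.

Lemma setIKU (X Y : {set W}) : X :&: (X :|: Y) = X.
Proof. by rewrite setUC setKU. Qed.

Definition frame_algebra : modalAlgebra :=
  ModalAlgebra (@setUC W) (@setIC W) (@setUA W) (@setIA W) setUKI setIKU (@setIUr W)
    (@setUIr W) (@set0U W) (@setTI W) (@setUCr W) (@setICr W) frame_box_setT frame_box_setI.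
Canonical frame_algebra.

Lemma frame_aeval (V : nat -> W -> bool) p w :
  w \in aeval (A := frame_algebra) (fun i => [set u | V i u]) p <-> ksat R V w p.
Proof.
elim: p w => /= [i|||p IHp|p IHp q IHq|p IHp q IHq|p IHp q IHq|p IHp] w; rewrite ?inE //.
- by rewrite -IHp; split=> /negP.
- by rewrite -IHp -IHq; split=> /andP.
- by rewrite -IHp -IHq; split=> /orP.
- by rewrite -IHp -IHq -implybE; split=> /implyP.
- split=> [/forallP Xw u Rwu|Hw]; first by apply/IHp; exact: implyP (Xw u) Rwu.
  by apply/forallP => u; apply/implyP => /Hw /IHp.
Qed.

Lemma frame_algebra_V_L (L : fm -> Prop) :
  (forall p, L p -> frame_valid R p) -> V_L L frame_algebra.
Proof.
move=> valid p Lp v; apply/setP => w; rewrite inE.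
have -> : aeval v p = aeval (fun i => [set u | u \in v i]) p.
  by apply: aeval_ext => i; apply/setP => u; rewrite inE.
by apply/frame_aeval/valid.
Qed.

End FrameAlgebra.

Section Chain.
Context {W : finType} (R : rel W).
Hypothesis R_chain : is_chain R.

Definition rank (w : W) : nat := #|[set u | R u w & u != w]|.

Lemma rank_lt {u w} : R u w -> u != w -> rank u < rank w.
Proof.
have [R_trans R_anti _] := R_chain.
move=> Ruw uw; apply: proper_card; apply/properP; split.
  apply/subsetP => v; rewrite !inE => /andP [Rvu vu].
  have vw : v != w by apply: contra_neq uw => vw; subst v; apply: R_anti; rewrite ?Ruw ?Rvu orbT.
  by rewrite vw andbT; move: (R_trans v u w); rewrite Rvu Ruw !orbT (negbTE vw); apply.
by exists u; rewrite !inE ?eqxx ?Ruw ?uw ?andbF.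
Qed.

Lemma rank_neq_lt {u w} : u != w -> (rank u < rank w) || (rank w < rank u).
Proof.
have [_ _ R_total] := R_chain.
move=> uw; have [/orP [/eqP uw'|Ruw]|/orP [/eqP wu|Rwu]] := R_total u w.
- by rewrite uw' eqxx in uw.
- by rewrite rank_lt.
- by rewrite wu eqxx in uw.
- by rewrite (rank_lt Rwu) ?orbT // eq_sym.
Qed.

Lemma rank_inj : injective rank.
Proof.
by move=> u w ruw; apply/eqP/negPn/negP => /rank_neq_lt; rewrite ruw ltnn.
Qed.

Lemma lt_rank_R {u w} : rank u < rank w -> R u w.
Proof.
have [_ _ R_total] := R_chain.
move=> ruw; have [/orP [/eqP uw|//]|/orP [/eqP wu|Rwu]] := R_total u w;
  try by subst; rewrite ltnn in ruw.
have wu : w != u by apply: contraTneq ruw => ->; rewrite ltnn.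
by have := rank_lt Rwu wu; lia.
Qed.

Lemma rank_lt_card w : rank w < #|W|.
Proof.
rewrite -(cardsT W); apply: proper_card; apply/properP; split; first exact: subsetT.
by exists w; rewrite !inE ?eqxx ?andbF.
Qed.

Lemma rank_onto k : k < #|W| -> exists w, rank w = k.
Proof.
move=> kW; pose f w : 'I_#|W| := Ordinal (rank_lt_card w).
have f_inj : injective f by move=> u w /(congr1 val) /rank_inj.
have [w /(congr1 val) /= kw] := codomP (inj_card_onto f_inj (eq_leq (card_ord _)) (Ordinal kW)).
by exists w.
Qed.

Definition even_rank : {set W} := [set w | ~~ odd (rank w)].
Definition odd_rank : {set W} := [set w | odd (rank w)].

Local Notation t X := (tt3 (A := frame_algebra R) X even_rank odd_rank).
Local Notation t_iter k := (titer (A := frame_algebra R) k set0 even_rank odd_rank).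

Definition rank_up (X : {set W}) : Prop :=
  forall w u, w \in X -> rank w <= rank u -> u \in X.

Lemma frame_box_up (X : {set W}) : rank_up (frame_box R X).
Proof.
move=> w u Xw; rewrite leq_eqVlt => /orP [/eqP /rank_inj <-//|wu].
move: Xw; rewrite !inE => /forallP Xw.
apply/forallP => v; apply/implyP => Ruv; apply: implyP (Xw v) _; apply: lt_rank_R.
have [<-//|uv] := eqVneq u v; exact: ltn_trans wu (rank_lt Ruv uv).
Qed.

Lemma frame_box_rank_bound (X : {set W}) (b : bool) l : l <= #|W| ->
  (forall u, u \in X -> (odd (rank u) == b) || (l <= rank u)) ->
  forall w, w \in frame_box R X -> l <= rank w + 2.
Proof.
move=> lW Xb w; rewrite inE => /forallP Xw; rewrite leqNgt; apply/negP => wl.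
have succ_parity i : 0 < i <= 2 -> odd (rank w + i) == b.
  move=> hi; have [u ru] := rank_onto (rank w + i) ltac:(lia).
  have /(implyP (Xw u)) /Xb : R w u by apply: lt_rank_R; lia.
  by rewrite ru leqNgt (_ : rank w + i < l) ?orbF //; lia.
move: (succ_parity 1 isT) (succ_parity 2 isT); rewrite !oddD /= addbT addbF => /eqP <-.
by case: (odd (rank w)).
Qed.

Lemma tt3_rank_bound (X : {set W}) l : l <= #|W| -> (forall u, u \in X -> l <= rank u) ->
  forall w, w \in t X -> l <= rank w + 4.
Proof.
move=> lW Xl w; rewrite in_setU => /orP [w_box|/Xl]; last lia.
have inner u : u \in frame_box R (odd_rank :|: X) -> l <= rank u + 2.
  apply: (frame_box_rank_bound _ true) => // v.
  by rewrite in_setU inE => /orP [->//|/Xl ->]; rewrite orbT.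
suff : l - 2 <= rank w + 2 by lia.
apply: (frame_box_rank_bound _ false) w w_box; first lia.
move=> u; rewrite in_setU => /orP [|/inner uX]; first by rewrite inE => /negbTE ->.
by apply/orP; right; lia.
Qed.

Lemma tt3_up (X : {set W}) : rank_up X -> rank_up (t X).
Proof.
move=> Xup w u; rewrite !in_setU => /orP [/frame_box_up w_box|/Xup wX] wu.
  by rewrite (w_box u wu).
by rewrite (wX u wu) orbT.
Qed.

Lemma tt3_strict (X : {set W}) w0 : rank_up X -> w0 \notin X ->
  exists2 w, w \in t X & w \notin X.
Proof.
move=> Xup Xw0; case: (@arg_maxnP _ w0 (fun u => u \notin X) rank Xw0) => w wX wmax.
have above u : rank w < rank u -> u \in X.
  by move=> wu; apply: contraTT wu => /wmax; rewrite -leqNgt.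
have box_above u : rank w <= rank u -> (u \in odd_rank) || (rank w < rank u) ->
    u \in frame_box R (odd_rank :|: X).
  move=> wu uw; rewrite inE; apply/forallP => v; apply/implyP => Ruv; rewrite in_setU.
  have [<-|uv] := eqVneq u v; first by case/orP: uw => [->//|/above ->]; rewrite orbT.
  by rewrite above ?orbT //; exact: leq_ltn_trans wu (rank_lt Ruv uv).
exists w => //; rewrite in_setU inE; apply/orP; left; apply/forallP => u.
apply/implyP => Rwu; rewrite in_setU; have [<-|wu] := eqVneq w u.
  case: (boolP (w \in odd_rank)) => [w_odd|]; last by rewrite !inE => ->.
  by rewrite box_above ?w_odd ?orbT.
have wu' := rank_lt Rwu wu.
by rewrite box_above ?wu' ?orbT // ltnW.
Qed.

Lemma chain_titer_strict n : #|W| = (4 * n).+1 ->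
  ~ ale (t_iter n.+1) (t_iter n).
Proof.
move=> cardW.
have titer_up k : rank_up (t_iter k).
  by elim: k => [|k IHk]; [move=> w u; rewrite inE | exact: tt3_up].
have titer_bound k w : w \in t_iter k -> #|W| - 4 * k <= rank w.
  elim: k w => [|k IHk] w; first by rewrite inE.
  by move=> /(tt3_rank_bound _ _ (leq_subr _ _) IHk); lia.
have [w0 rw0] := rank_onto 0 ltac:(lia).
have [|w wt wX] := tt3_strict _ w0 (titer_up n); first by apply/negP => /titer_bound; lia.
by move=> /setUidPr /subsetP /(_ w wt); rewrite (negbTE wX).
Qed.

End Chain.

Lemma finite_chains_titer_strict (L : fm -> Prop) n : admits_finite_chains L ->
  exists (C : modalAlgebra) (a b c : C), V_L L C /\ ~ ale (titer n.+1 a b c) (titer n a b c).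
Proof.
move=> /(_ (4 * n).+1) [W [R [cardW R_chain R_valid]]].
exists (frame_algebra R), set0, (even_rank R), (odd_rank R); split.
  exact: frame_algebra_V_L.
exact: chain_titer_strict.
Qed.

Definition fixpoint_between (C : modalAlgebra) (a b c d s : C) : Prop :=
  [/\ ale a s, s = tt3 s b c & ale s d].

(* Variables 0, 1, 2, 3, 4 stand for a, b, c, d, s. *)
Definition fixpoint_relations : seq (fm * fm) :=
  [:: (Or (Var 0) (Var 4), Var 4); (Var 4, tfm (Var 4) (Var 1) (Var 2));
      (Or (Var 4) (Var 3), Var 3)].

Definition fixpoint_class : valuation_class := eqn_class 5 fixpoint_relations.

Definition some_fixpoint_class : valuation_class := fun C e =>
  vanish_from 4 e /\ exists s, fixpoint_between C (e 0) (e 1) (e 2) (e 3) s.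

Definition titer_class (n : nat) : valuation_class := fun C e =>
  vanish_from 4 e /\ ale (titer n (e 0) (e 1) (e 2)) (e 3).

Lemma fixpoint_classE (C : modalAlgebra) (e : nat -> C) : fixpoint_class C e <->
  vanish_from 5 e /\ fixpoint_between C (e 0) (e 1) (e 2) (e 3) (e 4).
Proof.
split=> [[e_van eE]|[e_van [ae4 e4 e43]]]; last by split=> // pq /= [<-|[<-|[<-|[]]]].
split=> //; split.
- exact: eE _ (or_introl erefl).
- exact: eE _ (or_intror (or_introl erefl)).
- exact: eE _ (or_intror (or_intror (or_introl erefl))).
Qed.

Lemma some_fixpoint_vanishing : vanishing 4 some_fixpoint_class.
Proof. by move=> C e []. Qed.

Lemma titer_class_vanishing n : vanishing 4 (titer_class n).
Proof. by move=> C e []. Qed.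

Lemma titer_class_anti m n (C : modalAlgebra) (e : nat -> C) :
  m <= n -> titer_class n C e -> titer_class m C e.
Proof. by move=> mn [e_van e_le]; split=> //; apply: ale_trans e_le; apply: titer_mono. Qed.

Definition trunc_Var (k i : nat) : fm := if i < k then Var i else Bot.

Lemma aeval_trunc_Var (C : modalAlgebra) (e : nat -> C) k p :
  aeval e (subst (trunc_Var k) p) = aeval (fun i => if i < k then e i else bot) p.
Proof. by rewrite aeval_subst; apply: aeval_ext => i; rewrite /trunc_Var; case: ifP. Qed.

Section FixpointPresentation.
Variable L : fm -> Prop.

Lemma th_some_fixpoint_class p q : th L some_fixpoint_class p q <->
  th L fixpoint_class (subst (trunc_Var 4) p) (subst (trunc_Var 4) q).
Proof.
split=> [Hpq C e VC /fixpoint_classE [e_van e_fix]|Hpq C e VC [e_van [s e_fix]]].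
  rewrite !aeval_trunc_Var; apply: Hpq => //; split; last by exists (e 4).
  by move=> i hi /=; rewrite ltnNge hi.
pose e' i := if i < 4 then e i else if i == 4 then s else bot.
have e'E r : aeval e r = aeval e' (subst (trunc_Var 4) r).
  by rewrite aeval_trunc_Var; apply: aeval_ext => i; rewrite /e'; case: ltnP => // /e_van.
rewrite !e'E; apply: Hpq => //; apply/fixpoint_classE; split=> // i hi.
by rewrite /e' ltnNge (ltnW hi) /= gtn_eqF.
Qed.

Lemma titer_le_some_fixpoint k :
  th L some_fixpoint_class (Or (tfm_iter k (Var 0) (Var 1) (Var 2)) (Var 3)) (Var 3).
Proof.
move=> C e VC [_ [s [a_s s_fix s_d]]]; rewrite /= aeval_tfm_iter.
exact: ale_trans (titer_le_fixpoint k a_s s_fix) s_d.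
Qed.

(* The fixpoint provided by the embedding condition is the join of the iterates, hence below d. *)
Lemma some_fixpoint_th_union : fixpoint_embedding_condition L ->
  forall p q, th L some_fixpoint_class p q -> th_union L titer_class p q.
Proof.
move=> fec p q Hpq; pose R := th_union_cong L titer_class titer_class_anti.
have RVar i : 4 <= i -> R (Var i) Bot.
  by move=> hi; exists 0; apply: th_Var_Bot (titer_class_vanishing 0) i hi.
have [B [f [VB [f_hom f_inj] [s [[s_ub s_least] s_fix]]]]] :=
  fec (lindenbaum R) (lindenbaum_V_L R) (ex_intro _ _ (lindenbaum_generated RVar))
    (cls R (Var 0)) (cls R (Var 1)) (cls R (Var 2)).
pose e i := f (cls R (Var i)).
have eE r : aeval e r = f (cls R r) by rewrite -(hom_aeval f_hom) aeval_cls_Var.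
have e_fix : some_fixpoint_class B e.
  split=> [i /RVar /cls_eq|]; first by rewrite /e => ->; case: f_hom => _ _ _ [].
  exists s; split=> //; first exact: s_ub 0.
  apply: s_least => k; rewrite /ale -(aeval_tfm_iter _ e k (Var 0) (Var 1) (Var 2)).
  change (aeval e (Or (tfm_iter k (Var 0) (Var 1) (Var 2)) (Var 3)) = aeval e (Var 3)).
  rewrite !eE; congr f; apply/cls_eq; exists k => C e' _ [_ e'_le].
  by rewrite /= aeval_tfm_iter.
by have := Hpq B e VB e_fix; rewrite !eE => /f_inj /cls_eq.
Qed.

Lemma some_fixpoint_fin_generated : fin_generated (lindenbaum (th_cong L some_fixpoint_class)).
Proof. by eexists; apply: lindenbaum_generated; apply: th_Var_Bot some_fixpoint_vanishing. Qed.

End FixpointPresentation.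

Theorem theorem4p3 (L : fm -> Prop) :
  normal_logic L -> admits_finite_chains L ->
  fixpoint_embedding_condition L ->
  ~ coherent (V_L L).
Proof.
move=> _ chains fec coherent_L.
have S_fp : fin_presented (V_L L) (lindenbaum (th_cong L some_fixpoint_class)).
  apply: (coherent_L _ (lindenbaum_V_L _) (eqn_class_fin_presented L 5 fixpoint_relations)).
    exact: (subst_embedding (R := th_cong L _) (R' := th_cong L _) _ (th_some_fixpoint_class L)).
  exact: some_fixpoint_fin_generated.
have [n th_n] := fin_presented_th_union L _ titer_class_anti some_fixpoint_vanishing
  titer_class_vanishing S_fp (some_fixpoint_th_union L fec).
have [C [a [b [c [VC not_le]]]]] := finite_chains_titer_strict L n chains.
pose e := val_of [:: a; b; c; titer n a b c].
have e_n : titer_class n C e by split; [exact: (val_of_vanish _ [:: a; b; c; _]) | exact: ale_refl].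
apply: not_le; have := th_n _ _ (titer_le_some_fixpoint L n.+1) C e VC e_n.
by rewrite /= aeval_tfm_iter.
Qed.
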